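(* For $n\ge 2$, the letter in position $idx$ ($1\le idx\le 2\cdot4^{n-2}-1$) of the Koch code $w_n$ equals $1$ if and only if $$idx=4^{i}(2k-1)\quad\text{for some } i\in\{0,1,\dots,n-2\},\ k\in\{1,2,\dots,4^{\,n-2-i}\}.$$ Consequently $w_n$ contains exactly $\frac{4^{n-1}-1}{3}$ letters $1$ and exactly $\frac{2(4^{n-2}-1)}{3}$ letters $0$.
   Context: Let $R_\theta$ denote counterclockwise rotation of $\mathbb R^2$ by the angle $\theta$. The standard Koch curve at step $n$ is the polygon $K_n$ with vertices $r_1,\dots,r_{4^{n-1}+1}$ defined recursively: $K_1$ has vertices $(0,0),(1,0)$; $K_{n+1}$ is obtained from $K_n$ by replacing each edge from $p$ to $q$, in order, by the four edges through the points $p,\ p+\tfrac13(q-p),\ p+\tfrac13(q-p)+\tfrac13R_{\pi/3}(q-p),\ p+\tfrac23(q-p),\ q$, and numbering the resulting vertices consecutively starting from $(0,0)$. A vertex $r_i$ ($2\le i\le 4^{n-1}$) is a sharp point if the angle $\angle r_{i-1}r_ir_{i+1}$ equals $\pi/3$. For $n\ge 2$ the Koch code at step $n$ is the word $w_n=c_1\cdots c_{2\cdot4^{n-2}-1}$ over $\{0,1\}$ with $c_k=1$ iff $r_{2k+1}$ is a sharp point of $K_n$. (Equivalently, $w_2=1$ and $w_{n+1}=w_n0w_n1w_n0w_n$.) *)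

From mathcomp Require Import all_boot.
Set Implicit Arguments. Unset Strict Implicit. Unset Printing Implicit Defensive.

Definition koch_step (w : seq nat) : seq nat :=
  w ++ 0 :: w ++ 1 :: w ++ 0 :: w.

(* Koch code at step n (meaningful for n >= 2): w_2 = 1, w_{n+1} = koch_step w_n.
   Letters are the natural numbers 0 and 1. *)
Definition koch_code (n : nat) : seq nat := iter (n - 2) koch_step [:: 1].

Definition koch_letter (n idx : nat) : nat := nth 0 (koch_code n) idx.-1.

From mathcomp Require Import all_boot.
From mathcomp Require Import zify.

(* Let r(j) = 1 if the 2-adic valuation of j is even and 0 otherwise, and let
   P_e = r(1) ... r(2^e - 1).  Adding 2^e to a number below 2^e does not change
   its valuation, so P_{e+1} = P_e r(2^e) P_e; two such doublings, starting
   from an odd e, are exactly one Koch step w |-> w 0 w 1 w 0 w.  Hence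
   w_n = P_{2n-3}, and its 1s sit at the numbers 4^i times an odd number. *)

Definition ruler_letter (j : nat) : nat := ~~ odd (logn 2 j).

Definition ruler_prefix (e : nat) : seq nat :=
  mkseq (fun j => ruler_letter j.+1) (2 ^ e - 1).

Lemma mkseqD (T : Type) (f : nat -> T) m n :
  mkseq f (m + n) = mkseq f m ++ mkseq (fun j => f (m + j)) n.
Proof.
rewrite /mkseq iotaD map_cat add0n; congr (_ ++ _).
by rewrite -[m in iota m]addn0 iotaDl -map_comp.
Qed.

Lemma logn_pfactorMl p a o : prime p -> coprime p o -> logn p (o * p ^ a) = a.
Proof. by move=> p_pr co_po; rewrite logn_Gauss // pfactorK. Qed.

Lemma logn_addl_pfactor p e y :
  prime p -> 0 < y < p ^ e -> logn p (p ^ e + y) = logn p y.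
Proof.
move=> p_pr /andP[y_gt0 y_lt].
have [o co_po def_y] := pfactor_coprime p_pr y_gt0.
set a := logn p y in def_y *.
have a_lt_e : a < e.
  rewrite -(ltn_exp2l _ _ (prime_gt1 p_pr)) (leq_ltn_trans _ y_lt) // def_y.
  by rewrite leq_pmull // lt0n; apply: contraTneq y_gt0 => o0; rewrite def_y o0.
have [k def_e] : exists k, e = a + k.+1 by exists (e - a).-1; lia.
have -> : p ^ e + y = (p ^ k * p + o) * p ^ a.
  by rewrite def_y def_e mulnDl -mulnA -expnS -expnD !addnS [a + k]addnC.
by rewrite logn_pfactorMl // -coprime_modr modnMDl coprime_modr.
Qed.

Lemma ruler_letter_pow2 e : ruler_letter (2 ^ e) = ~~ odd e.
Proof. by rewrite /ruler_letter pfactorK. Qed.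

Lemma ruler_prefixS e :
  ruler_prefix e.+1 = ruler_prefix e ++ ruler_letter (2 ^ e) :: ruler_prefix e.
Proof.
have pow_gt0 : 0 < 2 ^ e by rewrite expn_gt0.
rewrite /ruler_prefix (_ : 2 ^ e.+1 - 1 = (2 ^ e - 1) + (1 + (2 ^ e - 1))).
  rewrite !mkseqD /= addn0 (_ : (2 ^ e - 1).+1 = 2 ^ e); last by lia.
  congr (_ ++ _ :: _); apply/eq_in_map => j; rewrite mem_iota => /andP[_ j_lt].
  rewrite (_ : _.+1 = 2 ^ e + j.+1); last by lia.
  by rewrite /ruler_letter logn_addl_pfactor //; lia.
by rewrite expnS; lia.
Qed.

Lemma koch_iter_ruler m : iter m koch_step [:: 1] = ruler_prefix m.*2.+1.
Proof.
elim: m => [|m IHm]; first by [].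
rewrite iterS IHm doubleS [ruler_prefix _.+3]ruler_prefixS.
rewrite [ruler_prefix _.+2]ruler_prefixS !ruler_letter_pow2 /= odd_double.
by rewrite /koch_step -!catA.
Qed.

Lemma expn2_odd m : 2 ^ m.*2.+1 = 2 * 4 ^ m.
Proof. by rewrite expnS -mul2n expnM. Qed.

Lemma ruler_letter_eq1P x : 0 < x ->
  ruler_letter x = 1 <-> exists i k, 0 < k /\ x = 4 ^ i * (2 * k - 1).
Proof.
move=> x_gt0; split.
- rewrite /ruler_letter; case a_odd: (odd _) => //= _.
  have [o co_2o def_x] := pfactor_coprime (isT : prime 2) x_gt0.
  exists (logn 2 x)./2, (o./2).+1; move: co_2o; rewrite coprime2n => o_odd.
  have def_a : logn 2 x = ((logn 2 x)./2).*2.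
    by rewrite -[LHS]odd_double_half a_odd add0n.
  have def_o : o = (o./2).*2.+1 by rewrite -{1}(odd_double_half o) o_odd.
  split=> //; rewrite {1}def_x {1}def_a -mul2n expnM mulnC {1}def_o.
  by congr (_ * _); lia.
- case=> i [k [k_gt0 ->]].
  rewrite /ruler_letter (_ : 4 ^ i = 2 ^ i.*2); last by rewrite -mul2n expnM.
  rewrite mulnC logn_pfactorMl ?odd_double // coprime2n.
  by rewrite (_ : 2 * k - 1 = (k.-1).*2.+1) /= ?odd_double //; lia.
Qed.

Lemma odd_multiple_pow4_bound m i k : 0 < k -> 4 ^ i * (2 * k - 1) < 2 * 4 ^ m ->
  i <= m /\ k <= 4 ^ (m - i).
Proof.
move=> k_gt0 x_lt.
have i_le_m : i <= m.
  rewrite leqNgt; apply/negP => m_lt_i.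
  have : 4 ^ m.+1 <= 4 ^ i by rewrite leq_exp2l.
  have : 4 ^ i <= 4 ^ i * (2 * k - 1) by rewrite leq_pmulr //; lia.
  rewrite expnS; lia.
split=> //.
have pow_gt0 : 0 < 4 ^ i by rewrite expn_gt0.
have split_pow : 4 ^ m = 4 ^ (m - i) * 4 ^ i by rewrite -expnD subnK.
move: x_lt; rewrite split_pow mulnA [4 ^ i * _]mulnC ltn_pmul2r //; lia.
Qed.

Lemma count_koch_step (a : nat) w :
  count_mem a (koch_step w) = 4 * count_mem a w + count_mem a [:: 0; 1; 0].
Proof.
rewrite /koch_step; do 3!rewrite count_cat /=.
by move: (count_mem a w) (0 == a) (1 == a) => c [] [] /=; lia.
Qed.

Lemma count_koch_iter m :
  3 * count_mem 1 (iter m koch_step [:: 1]) + 1 = 4 ^ m.+1 /\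
  3 * count_mem 0 (iter m koch_step [:: 1]) + 2 = 2 * 4 ^ m.
Proof.
elim: m => [|m [IH1 IH0]] //.
rewrite iterS !count_koch_step /= !expnS in IH1 *.
by move: IH1 IH0; move: (count_mem 1 _) (count_mem 0 _) (4 ^ m) => c1 c0 p; lia.
Qed.

Theorem mainTheorem4 (n : nat) (hn : 2 <= n) :
  (forall idx : nat, 1 <= idx <= 2 * 4 ^ (n - 2) - 1 ->
     (koch_letter n idx = 1 <->
      exists i k : nat, [/\ i <= n - 2, 1 <= k <= 4 ^ (n - 2 - i)
                         & idx = 4 ^ i * (2 * k - 1)]))
  /\ count (pred1 1) (koch_code n) = (4 ^ (n - 1) - 1) %/ 3
  /\ count (pred1 0) (koch_code n) = (2 * (4 ^ (n - 2) - 1)) %/ 3.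
Proof.
rewrite /koch_letter /koch_code (_ : n - 1 = (n - 2).+1); last by lia.
move: (n - 2) => m; have [count1 count0] := count_koch_iter m.
split; [move=> idx /andP[idx_gt0 idx_le] | split].
- rewrite koch_iter_ruler nth_mkseq; last by rewrite expn2_odd; lia.
  rewrite prednK // ruler_letter_eq1P //; split.
  + case=> i [k [k_gt0 def_idx]].
    have [i_le k_le] : i <= m /\ k <= 4 ^ (m - i).
      by apply: odd_multiple_pow4_bound k_gt0 _; rewrite -def_idx; lia.
    by exists i, k; rewrite k_gt0.
  + by case=> i [k [_ /andP[k_gt0 _] def_idx]]; exists i, k.
- by rewrite -count1 addnK mulKn.
- rewrite (_ : 2 * (4 ^ m - 1) = 3 * count_mem 0 (iter m koch_step [:: 1])).
    by rewrite mulKn.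
  lia.
Qed.
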